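(* Assume that $Q$ spans $E$ as a vector space, that $f$ is surjective, and that $R\cap f^{-1}(C)$ and $f^{-1}(C)$ span the same vector subspace of $E$. Then there exist $y_0\in\mathbb{R}^n$ and $c\in\mathbb{R}$ such that for every $y\in f(R)+C$: $$b_{Q,f,\ell,C}(y-y_0)-c\;\le\;b'_{Q,R,f,\ell,C}(y)\;\le\;b_{Q,f,\ell,C}(y),$$ with the conventions $-\infty-c=-\infty$, $+\infty-c=+\infty$.
   Context: $E$ is a finite-dimensional Euclidean space, $Q\subset E$ a convex cone (nonempty, stable under addition and multiplication by nonnegative reals), $f:E\to\mathbb{R}^n$ a linear map, $\ell:E\to\mathbb{R}$ a linear form, $C\subset\mathbb{R}^n$ a convex cone, and $R\subset E$ a lattice (an additive subgroup generated by a basis of $E$). Define $b_{Q,f,\ell,C}(y)=\sup\{\ell(x):x\in Q,\ y-f(x)\in C\}$ and $b'_{Q,R,f,\ell,C}(y)=\sup\{\ell(x):x\in Q\cap R,\ y-f(x)\in C\}$ for $y\in\mathbb{R}^n$, with $\sup\emptyset=-\infty$ and the supremum of an unbounded set equal to $+\infty$. $f(R)+C=\{f(r)+c:r\in R,c\in C\}$. *)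

From Stdlib Require Import Reals List ClassicalEpsilon.
Open Scope R_scope.

Definition idx (d : nat) := { i : nat | (i < d)%nat }.
Definition vec (d : nat) := idx d -> R.

Definition vzero {d} : vec d := fun _ => 0.
Definition vadd {d} (x y : vec d) : vec d := fun i => x i + y i.
Definition vscale {d} (a : R) (x : vec d) : vec d := fun i => a * x i.
Definition vsub {d} (x y : vec d) : vec d := fun i => x i - y i.

Definition is_linear {d m} (f : vec d -> vec m) : Prop :=
  (forall x y, f (vadd x y) = vadd (f x) (f y)) /\
  (forall a x, f (vscale a x) = vscale a (f x)).
Definition is_linear_form {d} (l : vec d -> R) : Prop :=
  (forall x y, l (vadd x y) = l x + l y) /\
  (forall a x, l (vscale a x) = a * l x).

Definition convex_cone {d} (K : vec d -> Prop) : Prop :=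
  (exists x, K x) /\
  (forall x y, K x -> K y -> K (vadd x y)) /\
  (forall a x, 0 <= a -> K x -> K (vscale a x)).

Definition lincomb {d} (l : list (R * vec d)) : vec d :=
  fold_right (fun p acc => vadd (vscale (fst p) (snd p)) acc) vzero l.
Definition span {d} (S : vec d -> Prop) (v : vec d) : Prop :=
  exists l : list (R * vec d), Forall (fun p => S (snd p)) l /\ v = lincomb l.

Definition vsum_nat {d} (n : nat) (g : nat -> vec d) : vec d :=
  fold_right (fun i acc => vadd (g i) acc) vzero (seq 0 n).

(* b : nat -> vec d (first d entries) is a basis of R^d. *)
Definition is_basis {d} (b : nat -> vec d) : Prop :=
  (forall c : nat -> R,
      vsum_nat d (fun i => vscale (c i) (b i)) = vzero ->
      forall i, (i < d)%nat -> c i = 0) /\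
  (forall v : vec d, exists c : nat -> R, v = vsum_nat d (fun i => vscale (c i) (b i))).

Definition is_lattice {d} (L : vec d -> Prop) : Prop :=
  exists b : nat -> vec d, is_basis b /\
    forall v, L v <-> exists z : nat -> Z, v = vsum_nat d (fun i => vscale (IZR (z i)) (b i)).

Inductive ereal := MInf | Fin (x : R) | PInf.

Definition ereal_le (a b : ereal) : Prop :=
  match a, b with
  | MInf, _ => True
  | _, PInf => True
  | Fin x, Fin y => x <= y
  | _, _ => False
  end.

Definition ereal_sub_R (a : ereal) (c : R) : ereal :=
  match a with Fin x => Fin (x - c) | e => e end.

Definition esup (S : R -> Prop) : ereal :=
  match excluded_middle_informative (exists x, S x) with
  | right _ => MInf
  | left Hne =>
      match excluded_middle_informative (bound S) with
      | right _ => PInf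
      | left Hb => Fin (proj1_sig (completeness S Hb Hne))
      end
  end.

Definition bval {d n} (Q : vec d -> Prop) (f : vec d -> vec n) (l : vec d -> R)
  (C : vec n -> Prop) (y : vec n) : ereal :=
  esup (fun r => exists x, Q x /\ C (vsub y (f x)) /\ r = l x).

Definition bval' {d n} (Q L : vec d -> Prop) (f : vec d -> vec n) (l : vec d -> R)
  (C : vec n -> Prop) (y : vec n) : ereal :=
  esup (fun r => exists x, Q x /\ L x /\ C (vsub y (f x)) /\ r = l x).

(** Choose finitely many vectors [s_1, ..., s_m] in [R ∩ f^{-1}(C)] spanning the common
    span [V], and write [-s_i = P_i - N_i] with [P_i, N_i ∈ Q]; put [w = Σ N_i].  Any
    [p = Σ a_i s_i ∈ V] splits as [Σ ⌊a_i⌋ s_i + k] with [k = Σ t_i s_i], [t_i ∈ [0,1]]: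
    the first summand lies in [R], [f k ∈ C], and [w - k = Σ ((1 - t_i) N_i + t_i P_i)]
    lies in [Q] with [ℓ(w - k) ≥ -c] for [c = Σ (|ℓ N_i| + |ℓ P_i|)].
    Take [y0 = f w].  For [y = f r + z] and [x] feasible for [b] at [y - f w], the vector
    [p = x + w - r] satisfies [f p ∈ C - C], hence lies in [V], and [x + w - k = r + (p - k)]
    is a lattice point of [Q] feasible for [b'] at [y] with [ℓ]-value at least [ℓ x - c].
    The upper bound holds because [Q ∩ R ⊆ Q]. *)

From Stdlib Require Import Reals List ClassicalEpsilon.
From Stdlib Require Import Lra Lia Classical FunctionalExtensionality ProofIrrelevance.
Open Scope R_scope.

Ltac vec_ring :=
  apply functional_extensionality; intro;
  unfold vadd, vsub, vscale, vzero; simpl; ring.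

Lemma idx_eq {d} (i j : idx d) : proj1_sig i = proj1_sig j -> i = j.
Proof.
  destruct i as [i Hi], j as [j Hj]; simpl; intros <-. f_equal. apply proof_irrelevance.
Qed.

Lemma lincomb_app {d} (l1 l2 : list (R * vec d)) :
  lincomb (l1 ++ l2) = vadd (lincomb l1) (lincomb l2).
Proof.
  unfold lincomb. induction l1 as [|[a v] l1 IH]; simpl.
  - vec_ring.
  - rewrite IH. vec_ring.
Qed.

Lemma span_zero {d} (S : vec d -> Prop) : span S vzero.
Proof. exists nil. split; [constructor | reflexivity]. Qed.

Lemma span_in {d} (S : vec d -> Prop) x : S x -> span S x.
Proof.
  intros Sx. exists ((1, x) :: nil). split.
  - repeat constructor; assumption.
  - unfold lincomb; simpl. vec_ring.
Qed.

Lemma span_add {d} (S : vec d -> Prop) u v : span S u -> span S v -> span S (vadd u v).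
Proof.
  intros [l1 [F1 ->]] [l2 [F2 ->]]. exists (l1 ++ l2). split.
  - now apply Forall_app.
  - symmetry. apply lincomb_app.
Qed.

Lemma span_scale {d} (S : vec d -> Prop) a u : span S u -> span S (vscale a u).
Proof.
  intros [l1 [F1 ->]]. exists (map (fun p => (a * fst p, snd p)) l1). split.
  - induction F1; simpl; constructor; auto.
  - unfold lincomb. induction l1 as [|[b v] l1 IH]; simpl.
    + vec_ring.
    + inversion F1; subst. rewrite <- IH by assumption. vec_ring.
Qed.

Lemma span_incl_span {d} (S T : vec d -> Prop) v :
  (forall x, S x -> span T x) -> span S v -> span T v.
Proof.
  intros HST [l [F ->]]. unfold lincomb.
  induction F as [|[a x] l Sx F IH]; simpl.
  - apply span_zero.
  - apply span_add; [apply span_scale, HST, Sx | exact IH].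
Qed.

Lemma span_nil {d} (p : vec d) : span (fun y => In y nil) p -> p = vzero.
Proof.
  intros [[|[a x] l] [F ->]]; [reflexivity |].
  inversion F as [|? ? Hx]; contradiction.
Qed.

Lemma span_cons_inv {d} (s : vec d) ls p : span (fun y => In y (s :: ls)) p ->
  exists a p', span (fun y => In y ls) p' /\ p = vadd (vscale a s) p'.
Proof.
  intros [l [F ->]]. unfold lincomb.
  induction F as [|[b t] l Ht F IH]; simpl in *.
  - exists 0, vzero. split; [apply span_zero | vec_ring].
  - destruct IH as [a [p' [Hp' ->]]]. destruct Ht as [<- | Ht].
    + exists (b + a), p'. split; [assumption | vec_ring].
    + exists a, (vadd (vscale b t) p'). split.
      * apply span_add; [apply span_scale, span_in, Ht | exact Hp'].
      * vec_ring.
Qed.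

Lemma cone_vzero {d} (K : vec d -> Prop) : convex_cone K -> K vzero.
Proof.
  intros [[x Kx] [_ Kscale]]. replace vzero with (vscale 0 x) by vec_ring.
  apply Kscale; [lra | exact Kx].
Qed.

Lemma cone_span_diff {d} (Q : vec d -> Prop) v : convex_cone Q -> span Q v ->
  exists P N, Q P /\ Q N /\ v = vsub P N.
Proof.
  intros HQ [l [F ->]]. pose proof (cone_vzero Q HQ) as Q0.
  destruct HQ as [_ [Qadd Qscale]]. unfold lincomb.
  induction F as [|[a q] l Qq F IH]; simpl in *.
  - exists vzero, vzero. repeat split; try assumption. vec_ring.
  - destruct IH as [P [N [QP [QN ->]]]]. destruct (Rle_dec 0 a).
    + exists (vadd (vscale a q) P), N. repeat split; auto. vec_ring.
    + exists P, (vadd (vscale (-a) q) N). repeat split; auto.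
      * apply Qadd; [apply Qscale; [lra | exact Qq] | exact QN].
      * vec_ring.
Qed.

Lemma linear_vzero {d m} (f : vec d -> vec m) : is_linear f -> f vzero = vzero.
Proof.
  intros [_ fscale]. replace (@vzero d) with (vscale 0 (@vzero d)) by vec_ring.
  rewrite fscale. vec_ring.
Qed.

Lemma linear_vsub {d m} (f : vec d -> vec m) x y :
  is_linear f -> f (vsub x y) = vsub (f x) (f y).
Proof.
  intros [fadd fscale]. replace (vsub x y) with (vadd x (vscale (-1) y)) by vec_ring.
  rewrite fadd, fscale. vec_ring.
Qed.

Lemma linear_form_vzero {d} (l : vec d -> R) : is_linear_form l -> l vzero = 0.
Proof.
  intros [_ lscale]. replace (@vzero d) with (vscale 0 (@vzero d)) by vec_ring.
  rewrite lscale. ring.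
Qed.

Lemma vsum_nat_vadd {d} m (g h : nat -> vec d) :
  vsum_nat m (fun i => vadd (g i) (h i)) = vadd (vsum_nat m g) (vsum_nat m h).
Proof.
  unfold vsum_nat. induction (seq 0 m) as [|i ns IH]; simpl; [|rewrite IH]; vec_ring.
Qed.

Lemma vsum_nat_vscale {d} m a (g : nat -> vec d) :
  vsum_nat m (fun i => vscale a (g i)) = vscale a (vsum_nat m g).
Proof.
  unfold vsum_nat. induction (seq 0 m) as [|i ns IH]; simpl; [|rewrite IH]; vec_ring.
Qed.

Lemma lattice_vzero {d} (L : vec d -> Prop) : is_lattice L -> L vzero.
Proof.
  intros [b [_ HLb]]. apply HLb. exists (fun _ => 0%Z).
  replace (fun i => vscale (IZR 0) (b i)) with (fun i => vscale 0 (b i))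
    by reflexivity.
  rewrite vsum_nat_vscale. vec_ring.
Qed.

Lemma lattice_vadd {d} (L : vec d -> Prop) u v :
  is_lattice L -> L u -> L v -> L (vadd u v).
Proof.
  intros [b [_ HLb]] Lu Lv. apply HLb in Lu as [zu ->]. apply HLb in Lv as [zv ->].
  apply HLb. exists (fun i => (zu i + zv i)%Z). rewrite <- vsum_nat_vadd.
  f_equal. apply functional_extensionality; intro i. rewrite plus_IZR. vec_ring.
Qed.

Lemma lattice_zscale {d} (L : vec d -> Prop) (m : Z) u :
  is_lattice L -> L u -> L (vscale (IZR m) u).
Proof.
  intros [b [_ HLb]] Lu. apply HLb in Lu as [zu ->].
  apply HLb. exists (fun i => (m * zu i)%Z). rewrite <- vsum_nat_vscale.
  f_equal. apply functional_extensionality; intro i. rewrite mult_IZR. vec_ring.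
Qed.

Lemma lift_spanning_family {d} (S : vec d -> Prop) (s0 : vec d) ls :
  (forall e, In e ls -> exists s a, S s /\ e = vsub s (vscale a s0)) ->
  exists ls', (forall x, In x ls' -> S x) /\
    forall e, In e ls -> span (fun y => In y (s0 :: ls')) e.
Proof.
  induction ls as [|e ls IH]; intros Hls.
  - exists nil. split; intros x [].
  - destruct IH as [ls' [Sls' Hspan]]; [intros e' He'; apply Hls; now right |].
    destruct (Hls e (or_introl eq_refl)) as [s [a [Ss ->]]].
    exists (s :: ls'). split.
    + intros x [<- | Hx]; auto.
    + intros e' [<- | He'].
      * replace (vsub s (vscale a s0)) with (vadd s (vscale (-a) s0)) by vec_ring.
        apply span_add; [| apply span_scale]; apply span_in; simpl; auto.
      * apply (span_incl_span (fun y => In y (s0 :: ls'))); [| auto].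
        intros x Hx. apply span_in. simpl in *. tauto.
Qed.

(* Induction on the number [d0] of coordinates that may be nonzero: if some [s0 ∈ S] has
   nonzero coordinate [d0 - 1], subtracting multiples of [s0] kills that coordinate. *)
Lemma finite_spanning_subfamily_aux d (d0 : nat) : (d0 <= d)%nat ->
  forall S : vec d -> Prop,
  (forall s, S s -> forall i : idx d, (d0 <= proj1_sig i)%nat -> s i = 0) ->
  exists ls, (forall x, In x ls -> S x) /\ forall x, S x -> span (fun y => In y ls) x.
Proof.
  induction d0 as [|d0 IH]; intros Hd0 S Hsupp.
  - exists nil. split; [intros x [] |]. intros x Sx.
    replace x with (@vzero d); [apply span_zero |].
    apply functional_extensionality; intro i. symmetry. apply (Hsupp x Sx). lia.
  - destruct (classic (exists s0 i0, S s0 /\ proj1_sig i0 = d0 /\ s0 i0 <> 0))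
      as [[s0 [i0 [Ss0 [Hi0 Hnz]]]] | Hnone].
    + set (reduce s := vsub s (vscale (s i0 / s0 i0) s0)).
      destruct (IH ltac:(lia) (fun e => exists s, S s /\ e = reduce s))
        as [ls [Hls Hspan]].
      { intros e [s [Ss ->]] i Hi. unfold reduce, vsub, vscale.
        destruct (Nat.eq_dec (proj1_sig i) d0) as [E | E].
        - rewrite (idx_eq i i0) by congruence. field. exact Hnz.
        - rewrite (Hsupp s Ss i), (Hsupp s0 Ss0 i) by lia. ring. }
      destruct (lift_spanning_family S s0 ls) as [ls' [Sls' Hspan']].
      { intros e He. destruct (Hls e He) as [s [Ss ->]]. now exists s, (s i0 / s0 i0). }
      exists (s0 :: ls'). split.
      * intros x [<- | Hx]; auto.
      * intros x Sx. replace x with (vadd (reduce x) (vscale (x i0 / s0 i0) s0))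
          by (unfold reduce; vec_ring).
        apply span_add.
        -- apply (span_incl_span (fun y => In y ls)); [exact Hspan' |].
           apply Hspan. eauto.
        -- apply span_scale, span_in. now left.
    + apply IH; [lia |]. intros s Ss i Hi.
      destruct (Nat.eq_dec (proj1_sig i) d0) as [E | E].
      * apply NNPP; intro Hne. apply Hnone. eauto.
      * apply Hsupp; [exact Ss | lia].
Qed.

Lemma finite_spanning_subfamily {d} (S : vec d -> Prop) :
  exists ls, (forall x, In x ls -> S x) /\ forall x, S x -> span (fun y => In y ls) x.
Proof.
  apply (finite_spanning_subfamily_aux d d (le_n d)).
  intros s _ [i Hi] Hdi. simpl in Hdi. lia.
Qed.

Lemma esup_sub_le (A B : R -> Prop) (c : R) :
  (forall s, A s -> exists t, B t /\ s - c <= t) ->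
  ereal_le (ereal_sub_R (esup A) c) (esup B).
Proof.
  intros HAB. unfold esup.
  destruct (excluded_middle_informative (exists x, A x)) as [HneA | HneA]; [| exact I].
  destruct (excluded_middle_informative (exists x, B x)) as [HneB | HneB].
  2:{ exfalso. destruct HneA as [x Ax]. destruct (HAB x Ax) as [t [Bt _]]. eauto. }
  destruct (excluded_middle_informative (bound A)) as [HbA | HbA];
  destruct (excluded_middle_informative (bound B)) as [HbB | HbB]; simpl; try exact I.
  - destruct (completeness A HbA HneA) as [sa [? Hlub]].
    destruct (completeness B HbB HneB) as [sb [Hub ?]]. simpl.
    enough (sa <= sb + c) by lra.
    apply Hlub. intros x Ax. destruct (HAB x Ax) as [t [Bt Hle]].
    specialize (Hub t Bt). lra.
  - apply HbA. destruct HbB as [M HM]. exists (M + c). intros x Ax.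
    destruct (HAB x Ax) as [t [Bt Hle]]. specialize (HM t Bt). lra.
Qed.

Lemma ereal_sub_R_0 e : ereal_sub_R e 0 = e.
Proof. destruct e; simpl; auto. now rewrite Rminus_0_r. Qed.

Lemma fractional_part_bounds (a : R) : exists m : Z, 0 <= a - IZR m <= 1.
Proof.
  exists (up a - 1)%Z. destruct (archimed a). rewrite minus_IZR.
  change (IZR 1) with 1. lra.
Qed.

Lemma linear_form_segment_lower_bound {d} (l : vec d -> R) (N P : vec d) t :
  is_linear_form l -> 0 <= t <= 1 ->
  - (Rabs (l N) + Rabs (l P)) <= l (vadd (vscale (1 - t) N) (vscale t P)).
Proof.
  intros [ladd lscale] Ht. rewrite ladd, !lscale.
  pose proof (Rle_abs (- l N)). pose proof (Rle_abs (- l P)). rewrite !Rabs_Ropp in *.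
  pose proof (Rabs_pos (l N)). pose proof (Rabs_pos (l P)).
  nra.
Qed.

Section Estimate.

Variables (d n : nat) (Q : vec d -> Prop) (f : vec d -> vec n) (l : vec d -> R)
  (C : vec n -> Prop) (L : vec d -> Prop).
Hypotheses (HQ : convex_cone Q) (Hf : is_linear f) (Hl : is_linear_form l)
  (HC : convex_cone C) (HL : is_lattice L).

Lemma lattice_rounding (HQspan : forall v, span Q v) ls :
  (forall x, In x ls -> L x /\ C (f x)) ->
  exists w c, forall p, span (fun y => In y ls) p ->
    exists k, C (f k) /\ L (vsub p k) /\ Q (vsub w k) /\ - c <= l (vsub w k).
Proof.
  pose proof HQ as [_ [Qadd Qscale]]. pose proof HC as [_ [Cadd Cscale]].
  pose proof Hf as [fadd fscale].
  induction ls as [|s ls IH]; intros Hls.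
  - exists vzero, 0. intros p Hp. rewrite (span_nil p Hp). exists vzero.
    replace (vsub (@vzero d) vzero) with (@vzero d) by vec_ring.
    rewrite (linear_vzero f Hf), (linear_form_vzero l Hl).
    repeat split; [apply (cone_vzero C HC) | apply (lattice_vzero L HL)
                  | apply (cone_vzero Q HQ) | lra].
  - destruct IH as [w [c Hround]]; [intros x Hx; apply Hls; now right |].
    destruct (Hls s (or_introl eq_refl)) as [Ls Cfs].
    destruct (cone_span_diff Q (vscale (-1) s) HQ (HQspan _)) as [P [N [QP [QN HPN]]]].
    exists (vadd N w), (c + (Rabs (l N) + Rabs (l P))).
    intros p Hp. destruct (span_cons_inv s ls p Hp) as [a [p' [Hp' ->]]].
    destruct (Hround p' Hp') as [k [Cfk [Lk [Qk Hlk]]]].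
    destruct (fractional_part_bounds a) as [m Ht]. set (t := a - IZR m) in Ht.
    assert (Hwk : vsub (vadd N w) (vadd (vscale t s) k)
                  = vadd (vadd (vscale (1 - t) N) (vscale t P)) (vsub w k)).
    { apply functional_extensionality; intro i.
      assert (Hsi : s i = N i - P i).
      { apply (f_equal (fun v => v i)) in HPN. unfold vscale, vsub in HPN. lra. }
      unfold vadd, vsub, vscale. rewrite Hsi. ring. }
    exists (vadd (vscale t s) k). repeat split.
    + rewrite fadd, fscale. apply Cadd; [apply Cscale; [lra |] |]; assumption.
    + replace (vsub (vadd (vscale a s) p') (vadd (vscale t s) k))
        with (vadd (vscale (IZR m) s) (vsub p' k)) by (unfold t; vec_ring).
      apply lattice_vadd, Lk; [exact HL |]. now apply lattice_zscale.
    + rewrite Hwk. apply Qadd; [apply Qadd; apply Qscale | ]; auto; lra.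
    + rewrite Hwk, (proj1 Hl).
      pose proof (linear_form_segment_lower_bound l N P t Hl Ht). lra.
Qed.

Hypothesis (Hfsurj : forall z : vec n, exists x, f x = z).

Lemma span_preimage_of_cone_diff (v : vec d) c1 c2 :
  C c1 -> C c2 -> f v = vsub c1 c2 -> span (fun x => C (f x)) v.
Proof.
  intros C1 C2 Hv. destruct (Hfsurj c1) as [a Ha]. destruct (Hfsurj c2) as [b Hb].
  replace v with (vadd (vadd a (vadd (vsub v a) b)) (vscale (-1) b)) by vec_ring.
  apply span_add; [apply span_add | apply span_scale]; apply span_in.
  - now rewrite Ha.
  - rewrite (proj1 Hf), linear_vsub, Hv, Ha, Hb by exact Hf.
    replace (vadd (vsub (vsub c1 c2) c1) c2) with (@vzero n) by vec_ring.
    apply (cone_vzero C HC).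
  - now rewrite Hb.
Qed.

Lemma bval_shift_le_bval' (V : vec d -> Prop) (w : vec d) (c : R) :
  (forall p, V p -> exists k, C (f k) /\ L (vsub p k) /\ Q (vsub w k) /\ - c <= l (vsub w k)) ->
  (forall v, span (fun x => C (f x)) v -> V v) ->
  forall r z, L r -> C z ->
  ereal_le (ereal_sub_R (bval Q f l C (vsub (vadd (f r) z) (f w))) c)
           (bval' Q L f l C (vadd (f r) z)).
Proof.
  pose proof HQ as [_ [Qadd _]]. pose proof HC as [_ [Cadd _]].
  intros Hround HV r z Lr Cz. apply esup_sub_le.
  intros s [x [Qx [Cx ->]]].
  set (p := vsub (vadd x w) r).
  assert (Vp : V p).
  { apply HV, (span_preimage_of_cone_diff p z (vsub (vsub (vadd (f r) z) (f w)) (f x)));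
      [exact Cz | exact Cx |].
    unfold p. rewrite !linear_vsub, (proj1 Hf) by exact Hf. vec_ring. }
  destruct (Hround p Vp) as [k [Cfk [Lpk [Qwk Hlwk]]]].
  exists (l (vadd x (vsub w k))). split.
  - exists (vadd x (vsub w k)). repeat split.
    + now apply Qadd.
    + replace (vadd x (vsub w k)) with (vadd r (vsub p k)) by (unfold p; vec_ring).
      now apply lattice_vadd.
    + rewrite (proj1 Hf), linear_vsub by exact Hf.
      replace (vsub (vadd (f r) z) (vadd (f x) (vsub (f w) (f k))))
        with (vadd (vsub (vsub (vadd (f r) z) (f w)) (f x)) (f k)) by vec_ring.
      now apply Cadd.
  - rewrite (proj1 Hl). lra.
Qed.

End Estimate.

Lemma bval'_le_bval {d n} (Q L : vec d -> Prop) (f : vec d -> vec n) (l : vec d -> R)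
  (C : vec n -> Prop) (y : vec n) :
  ereal_le (bval' Q L f l C y) (bval Q f l C y).
Proof.
  rewrite <- (ereal_sub_R_0 (bval' _ _ _ _ _ _)). apply esup_sub_le.
  intros s [x [Qx [_ [Cx ->]]]]. exists (l x). split; [exists x; auto | lra].
Qed.

Theorem proposition2p3 (d n : nat)
  (Q : vec d -> Prop) (f : vec d -> vec n) (l : vec d -> R)
  (C : vec n -> Prop) (L : vec d -> Prop)
  (HQ : convex_cone Q) (Hf : is_linear f) (Hl : is_linear_form l)
  (HC : convex_cone C) (HL : is_lattice L)
  (HQspan : forall v, span Q v)
  (Hfsurj : forall z : vec n, exists x, f x = z)
  (Hspan : forall v, span (fun x => L x /\ C (f x)) v <-> span (fun x => C (f x)) v) :
  exists (y0 : vec n) (c : R),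
    forall y : vec n,
      (exists r z, L r /\ C z /\ y = vadd (f r) z) ->
      ereal_le (ereal_sub_R (bval Q f l C (vsub y y0)) c) (bval' Q L f l C y) /\
      ereal_le (bval' Q L f l C y) (bval Q f l C y).
Proof.
  destruct (finite_spanning_subfamily (fun x => L x /\ C (f x))) as [ls [Hls Hgen]].
  destruct (lattice_rounding d n Q f l C L HQ Hf Hl HC HL HQspan ls Hls) as [w [c Hround]].
  exists (f w), c. intros y [r [z [Lr [Cz ->]]]]. split.
  - apply (bval_shift_le_bval' d n Q f l C L HQ Hf Hl HC HL Hfsurj
             (span (fun y => In y ls))); try assumption.
    intros v Hv. apply (span_incl_span (fun x => L x /\ C (f x))); [exact Hgen |].
    now apply Hspan.
  - apply bval'_le_bval.
Qed.
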